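(* Let $G$ be a group acting without inversions on a tree $T$ and let $H$ be a subgroup of $G$ acting freely on the edges of $T$. If $K_{T}(H)<\infty$, then $H$ is tame.
   Context: An element is hyperbolic if it fixes no vertex of $T$. If $H$ contains a hyperbolic element, $T_H$ is the unique minimal $H$-invariant subtree of $T$. $H$ is tame if either $H$ fixes a vertex of $T$, or $H$ contains a hyperbolic element and $T_H/H$ is finite. A vertex $v$ of $T$ is $H$-degenerate if $H_v=H_e$ for some edge $e$ with initial vertex $v$; the vertex $[v]_H$ of $T/H$ is then degenerate. For $H$ acting freely on edges, the Kurosh rank is $K_T(H)=r(T/H)+|V_{ndeg}(T/H)|$ if $H$ contains a hyperbolic element, where $r(T/H)$ is the rank of the fundamental group of $T/H$ and $V_{ndeg}(T/H)$ the set of non-degenerate vertices of $T/H$, and $K_T(H)=1$ otherwise. *)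

From Stdlib Require Import List.
Set Implicit Arguments.
Unset Strict Implicit.

Record graph := Graph {
  vert : Type;
  edge : Type;
  src : edge -> vert;
  rev : edge -> edge }.

Definition tgt (X : graph) (e : edge X) : vert X := src (rev e).

Definition serre (X : graph) : Prop :=
  (forall e : edge X, rev (rev e) = e) /\ (forall e : edge X, rev e <> e).

Definition subgraph (X : graph) (PV : vert X -> Prop) (PE : edge X -> Prop) : Prop :=
  forall e, PE e -> PV (src e) /\ PE (rev e).

Fixpoint path_in (X : graph) (PE : edge X -> Prop) (u v : vert X) (p : list (edge X))
  : Prop :=
  match p with
  | nil => u = v
  | e :: q => PE e /\ src e = u /\ path_in PE (tgt e) v q
  end.

Fixpoint reduced (X : graph) (p : list (edge X)) : Prop :=
  match p with
  | e :: ((f :: _) as q) => f <> rev e /\ reduced q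
  | _ => True
  end.

Definition connected_sub (X : graph) (PV : vert X -> Prop) (PE : edge X -> Prop) : Prop :=
  forall u v, PV u -> PV v -> exists p, path_in PE u v p.

Definition no_circuit (X : graph) (PE : edge X -> Prop) : Prop :=
  forall v p, p <> nil -> path_in PE v v p -> ~ reduced p.

Definition subtree (X : graph) (PV : vert X -> Prop) (PE : edge X -> Prop) : Prop :=
  subgraph PV PE /\ (exists v, PV v) /\ connected_sub PV PE /\ no_circuit PE.

Definition is_tree (X : graph) : Prop :=
  serre X /\ subtree (fun _ : vert X => True) (fun _ : edge X => True).

Definition fin_set (A : Type) (P : A -> Prop) : Prop :=
  exists l : list A, forall x, P x -> In x l.

Definition maximal_subtree (X : graph) (PV : vert X -> Prop) (PE : edge X -> Prop)
  (SV : vert X -> Prop) (SE : edge X -> Prop) : Prop :=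
  subtree SV SE /\ (forall v, SV v -> PV v) /\ (forall e, SE e -> PE e) /\
  (forall SV' SE', subtree SV' SE' -> (forall v, SV' v -> PV v) ->
     (forall e, SE' e -> PE e) ->
     (forall v, SV v -> SV' v) -> (forall e, SE e -> SE' e) ->
     (forall v, SV' v -> SV v) /\ (forall e, SE' e -> SE e)).

(* The rank of the fundamental group of the connected graph (PV,PE) is the number
   of geometric edges outside a maximal subtree; "finite rank" means this set is
   finite (for some, equivalently every, maximal subtree). *)
Definition pi1_rank_finite (X : graph) (PV : vert X -> Prop) (PE : edge X -> Prop)
  : Prop :=
  exists SV SE, maximal_subtree PV PE SV SE /\
    fin_set (fun e => PE e /\ ~ SE e).

Record group := Group {
  gcar :> Type;
  gmul : gcar -> gcar -> gcar;
  ginv : gcar -> gcar;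
  gone : gcar;
  gmulA : forall x y z, gmul x (gmul y z) = gmul (gmul x y) z;
  gmul1 : forall x, gmul gone x = x;
  gmulV : forall x, gmul (ginv x) x = gone }.

Definition subgroup (G : group) (H : G -> Prop) : Prop :=
  H (@gone G) /\ (forall x y, H x -> H y -> H (@gmul G x y)) /\
  (forall x, H x -> H (@ginv G x)).

Record action (G : group) (T : graph) := Action {
  actV : G -> vert T -> vert T;
  actE : G -> edge T -> edge T;
  actV1 : forall v, actV (@gone G) v = v;
  actVM : forall g h v, actV (@gmul G g h) v = actV g (actV h v);
  actE1 : forall e, actE (@gone G) e = e;
  actEM : forall g h e, actE (@gmul G g h) e = actE g (actE h e);
  act_src : forall g e, src (actE g e) = actV g (src e);
  act_rev : forall g e, rev (actE g e) = actE g (rev e) }.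

Section ActionDefs.
Variables (G : group) (T : graph) (A : action G T).

Definition without_inversions : Prop :=
  forall g e, actE A g e <> rev e.

Definition acts_freely_on_edges (H : G -> Prop) : Prop :=
  forall h e, H h -> actE A h e = e -> h = gone G.

Definition hyperbolic (g : G) : Prop := forall v, actV A g v <> v.

Definition fixes_vertex (H : G -> Prop) : Prop :=
  exists v, forall h, H h -> actV A h v = v.

Definition orbitV (H : G -> Prop) (v : vert T) : vert T -> Prop :=
  fun w => exists h, H h /\ actV A h v = w.
Definition orbitE (H : G -> Prop) (e : edge T) : edge T -> Prop :=
  fun f => exists h, H h /\ actE A h e = f.

(** The quotient graph T/H: vertices are H-orbits of vertices, edges are
    H-orbits of edges.  It is realised as the subgraph (QV, QE) of the graph
    whose vertices/edges are arbitrary sets of vertices/edges of T. *)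
Definition quot_graph (H : G -> Prop) : graph :=
  @Graph (vert T -> Prop) (edge T -> Prop)
    (fun X => fun w => exists e, X e /\ orbitV H (src e) w)
    (fun X => fun f => X (rev f)).

Definition QV (H : G -> Prop) : vert (quot_graph H) -> Prop :=
  fun X => exists v, X = orbitV H v.
Definition QE (H : G -> Prop) : edge (quot_graph H) -> Prop :=
  fun X => exists e, X = orbitE H e.

Definition H_degenerate (H : G -> Prop) (v : vert T) : Prop :=
  exists e, src e = v /\
    (forall h, H h -> (actV A h v = v <-> actE A h e = e)).

Definition quot_degenerate (H : G -> Prop) (X : vert (quot_graph H)) : Prop :=
  exists v, X = orbitV H v /\ H_degenerate H v.

(** K_T(H) < oo.  K_T(H) = r(T/H) + |V_ndeg(T/H)| if H contains a hyperbolic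
    element, and K_T(H) = 1 otherwise. *)
Definition Kurosh_rank_finite (H : G -> Prop) : Prop :=
  (exists h, H h /\ hyperbolic h) ->
  pi1_rank_finite (@QV H) (@QE H) /\
  fin_set (fun X => @QV H X /\ ~ @quot_degenerate H X).

Definition H_inv_subtree (H : G -> Prop) (SV : vert T -> Prop) (SE : edge T -> Prop)
  : Prop :=
  subtree SV SE /\ (forall h v, H h -> SV v -> SV (actV A h v)) /\
  (forall h e, H h -> SE e -> SE (actE A h e)).

Definition minimal_H_subtree (H : G -> Prop) (SV : vert T -> Prop) (SE : edge T -> Prop)
  : Prop :=
  H_inv_subtree H SV SE /\
  (forall SV' SE', H_inv_subtree H SV' SE' ->
     (forall v, SV' v -> SV v) -> (forall e, SE' e -> SE e) ->
     (forall v, SV v -> SV' v) /\ (forall e, SE e -> SE' e)).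

Definition finite_quotient (H : G -> Prop) (SV : vert T -> Prop) (SE : edge T -> Prop)
  : Prop :=
  fin_set (fun X => exists v, SV v /\ X = orbitV H v) /\
  fin_set (fun X => exists e, SE e /\ X = orbitE H e).

Definition tame (H : G -> Prop) : Prop :=
  fixes_vertex H \/
  ((exists h, H h /\ hyperbolic h) /\
   exists SV SE, minimal_H_subtree H SV SE /\ finite_quotient H SV SE).

End ActionDefs.

(* If H contains no hyperbolic element, every element of H fixes a vertex.  A nontrivial element
   fixes only one vertex, since otherwise it fixes the geodesic between two of its fixed vertices,
   hence an edge; and if a, b are nontrivial with fixed vertices p, q and a r = b r, then the
   reduced paths r -> p -> a r and r -> q -> b r coincide, which forces p = q.  So H fixes a vertex.

   Otherwise let S be a maximal subtree of T/H; it contains every vertex of T/H.  Finiteness of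
   K_T(H) says that only finitely many edges of T/H lie outside S and only finitely many vertices
   of T/H are non-degenerate.  These edges, together with the geodesics of S from a base point to
   the non-degenerate vertices and to the sources of these edges, form a finite subgraph of T/H
   whose preimage in T is an H-invariant subtree: a vertex of T outside the preimage has a
   degenerate image, hence a trivial stabiliser, so a geodesic of T leaving the preimage would
   project to a reduced path in S that closes up inside S to a circuit.  Among the H-invariant
   subtrees with finitely many edge orbits, one with the fewest orbits is minimal and has finite
   quotient. *)

From Stdlib Require Import List Classical FunctionalExtensionality PropExtensionality Lia Wf_nat.
Import ListNotations.
Set Implicit Arguments.
Unset Strict Implicit.

Section GroupFacts.
Variable G : group.
Implicit Types x k : G.

Lemma gmulV_r x : gmul x (ginv x) = gone G.
Proof.
  rewrite <- (gmul1 (gmul x (ginv x))), <- (gmulV (ginv x)) at 1.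
  rewrite <- gmulA, (gmulA (ginv x) x), gmulV, gmul1.
  apply gmulV.
Qed.

Lemma gmul1_r x : gmul x (gone G) = x.
Proof. rewrite <- (gmulV x), gmulA, gmulV_r. apply gmul1. Qed.

Lemma gconj_eq1 k x : gmul k (gmul x (ginv k)) = gone G -> x = gone G.
Proof.
  intros E.
  assert (E' : gmul (ginv k) (gmul k (gmul x (ginv k))) = ginv k)
    by (rewrite E; apply gmul1_r).
  rewrite gmulA, gmulV, gmul1 in E'.
  assert (E'' : gmul (gmul x (ginv k)) k = gmul (ginv k) k) by (rewrite E'; reflexivity).
  rewrite <- gmulA, gmulV, gmul1_r in E''. exact E''.
Qed.

End GroupFacts.

Lemma app_inj_length (B : Type) (l1 l2 m1 m2 : list B) :
  length l1 = length m1 -> l1 ++ l2 = m1 ++ m2 -> l1 = m1.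
Proof.
  revert m1; induction l1 as [|a l1 IH]; intros [|b m1] Hlen E; try discriminate; [reflexivity|].
  injection E as -> E. f_equal. apply IH; [injection Hlen|]; auto.
Qed.

Section Paths.
Variable X : graph.
Implicit Types (P Q : edge X -> Prop) (e : edge X) (p q : list (edge X)) (u v w : vert X).

Lemma path_in_app P p q u v :
  path_in P u v (p ++ q) <-> exists w, path_in P u w p /\ path_in P w v q.
Proof.
  revert u; induction p as [|e p IH]; intros u; simpl.
  - split; [eauto | intros (w & -> & Hq); exact Hq].
  - rewrite IH. split.
    + intros (He & Hs & w & Hp & Hq). eauto.
    + intros (w & (He & Hs & Hp) & Hq). eauto.
Qed.

Lemma path_in_target P Q p u v v' : path_in P u v p -> path_in Q u v' p -> v = v'.
Proof.
  revert u; induction p as [|e p IH]; simpl; intros u Hp Hq.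
  - congruence.
  - exact (IH _ (proj2 (proj2 Hp)) (proj2 (proj2 Hq))).
Qed.

Lemma path_in_edges P p u v : path_in P u v p -> forall e, In e p -> P e.
Proof.
  revert u; induction p as [|f p IH]; simpl; [tauto|].
  intros u (Hf & _ & Hp) e [<-|He]; eauto.
Qed.

Lemma path_in_retype P Q p u v :
  path_in P u v p -> (forall e, In e p -> Q e) -> path_in Q u v p.
Proof.
  revert u; induction p as [|f p IH]; simpl; intros u Hp HQ; [exact Hp|].
  destruct Hp as (_ & Hs & Hp). split; [auto|]. split; [exact Hs|]. eauto.
Qed.

Lemma path_in_first_hit (PV : vert X -> Prop) P p u v : path_in P u v p -> PV v ->
  exists m r z, p = m ++ r /\ path_in P u z m /\ PV z /\ forall f, In f m -> ~ PV (src f).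
Proof.
  revert u; induction p as [|e p IH]; intros u Hp Hv.
  - exists [], [], u. simpl in *. subst. intuition.
  - destruct (classic (PV u)) as [Hu|Hu].
    + exists [], (e :: p), u. simpl. intuition.
    + destruct Hp as (He & Hs & Hp).
      destruct (IH _ Hp Hv) as (m & r & z & -> & Hm & Hz & Hout).
      exists (e :: m), r, z. simpl. subst u.
      split; [reflexivity|]. split; [auto|]. split; [exact Hz|].
      intros f [<-|Hf]; auto.
Qed.

Lemma path_in_exit (PV : vert X -> Prop) P p u v : path_in P u v p -> PV u -> ~ PV v ->
  exists e, P e /\ PV (src e) /\ ~ PV (tgt e).
Proof.
  revert u; induction p as [|e p IH]; simpl; intros u Hp Hu Hv; [subst; contradiction|].
  destruct Hp as (He & <- & Hp). destruct (classic (PV (tgt e))); eauto.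
Qed.

Lemma reduced_tl e p : reduced (e :: p) -> reduced p.
Proof. destruct p; simpl; tauto. Qed.

Lemma reduced_app_l p q : reduced (p ++ q) -> reduced p.
Proof.
  induction p as [|e p IH]; [simpl; auto|].
  destruct p as [|f p]; simpl in *; [auto|]. intros [Hef Hp]. exact (conj Hef (IH Hp)).
Qed.

Lemma reduced_app p q : reduced p -> reduced q ->
  (forall p' x y q', p = p' ++ [x] -> q = y :: q' -> y <> rev x) -> reduced (p ++ q).
Proof.
  induction p as [|e p IH]; intros Hp Hq Hjoin; [exact Hq|].
  assert (Hrest : reduced (p ++ q)).
  { apply IH; [exact (reduced_tl Hp) | exact Hq |].
    intros p' x y q' -> ->. apply (Hjoin (e :: p') x y q'); reflexivity. }
  destruct p as [|f p]; simpl in *.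
  - destruct q as [|f q]; [exact I|]. split; [exact (Hjoin [] e f q eq_refl eq_refl) | exact Hq].
  - split; [apply Hp | exact Hrest].
Qed.

Definition revp p : list (edge X) := List.rev (map (@rev X) p).

Lemma revp_cons e p : revp (e :: p) = revp p ++ [rev e].
Proof. reflexivity. Qed.

Lemma revp_snoc p e : revp (p ++ [e]) = rev e :: revp p.
Proof. unfold revp. rewrite map_app, rev_app_distr. reflexivity. Qed.

Lemma length_revp p : length (revp p) = length p.
Proof. unfold revp. rewrite length_rev, length_map. reflexivity. Qed.

Hypothesis rev_invol : forall e, rev (rev e) = e.

Lemma tgt_rev e : tgt (rev e) = src e.
Proof. unfold tgt. rewrite rev_invol. reflexivity. Qed.

Lemma path_in_revp P p u v :
  (forall e, P e -> P (rev e)) -> path_in P u v p -> path_in P v u (revp p).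
Proof.
  intros HP; revert u; induction p as [|e p IH]; simpl; intros u Hp; [congruence|].
  destruct Hp as (He & Hs & Hp). rewrite revp_cons, path_in_app.
  exists (tgt e). split; [eauto|]. simpl. rewrite tgt_rev. auto.
Qed.

Lemma reduced_revp p : reduced p -> reduced (revp p).
Proof.
  induction p as [|e p IH]; intros Hp; [exact I|].
  rewrite revp_cons. apply reduced_app; [exact (IH (reduced_tl Hp)) | exact I |].
  intros p' x y q' Ep [= <- _].
  destruct p as [|f p]; [destruct p'; discriminate|].
  rewrite revp_cons in Ep. apply app_inj_tail in Ep as [_ <-].
  intros C. apply (proj1 Hp). rewrite rev_invol in C. symmetry; exact C.
Qed.

Lemma reduce_path P p u v : path_in P u v p -> exists p', reduced p' /\ path_in P u v p'.
Proof.
  revert u; induction p as [|e p IH]; intros u Hp; [exists []; split; [exact I | exact Hp]|].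
  destruct Hp as (He & Hs & Hp). destruct (IH _ Hp) as ([|f q] & Hq & Pq).
  - exists [e]. simpl in *. auto.
  - destruct (classic (f = rev e)) as [->|Hf].
    + exists q. split; [exact (reduced_tl Hq)|].
      destruct Pq as (_ & _ & Pq). rewrite tgt_rev, Hs in Pq. exact Pq.
    + exists (e :: f :: q). simpl in *. tauto.
Qed.

Lemma reduced_path_unique P : (forall e, P e -> P (rev e)) -> no_circuit P ->
  forall p1 p2 u v, path_in P u v p1 -> path_in P u v p2 ->
  reduced p1 -> reduced p2 -> p1 = p2.
Proof.
  intros HP Hnc; induction p1 as [|e p1 IH]; intros [|f p2] u v H1 H2 R1 R2; auto.
  - simpl in H1. subst v. exfalso. eapply Hnc; [| exact H2 | exact R2]; discriminate.
  - simpl in H2. subst v. exfalso. eapply Hnc; [| exact H1 | exact R1]; discriminate.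
  - destruct (classic (e = f)) as [<-|Hef].
    + f_equal. eapply IH; [exact (proj2 (proj2 H1)) | exact (proj2 (proj2 H2))
                          | exact (reduced_tl R1) | exact (reduced_tl R2)].
    + exfalso. apply (Hnc v (revp (f :: p2) ++ e :: p1)).
      * intros C. apply app_eq_nil in C as [_ C]. discriminate.
      * apply path_in_app. exists u. split; [apply path_in_revp|]; auto.
      * apply reduced_app; [apply reduced_revp; exact R2 | exact R1 |].
        intros p' x y q' Ep [= <- _]. rewrite revp_cons in Ep.
        apply app_inj_tail in Ep as [_ <-]. rewrite rev_invol. exact Hef.
Qed.

Lemma reduced_paths_edges_finite P (targets : list (vert X)) u :
  (forall e, P e -> P (rev e)) -> no_circuit P ->
  exists l, forall w p e, In w targets -> reduced p -> path_in P u w p ->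
    In e p \/ In (rev e) p -> In e l.
Proof.
  intros HP Hnc. induction targets as [|w0 targets IH].
  { exists []. intros w p e []. }
  destruct IH as (l & Hl).
  destruct (classic (exists p0, reduced p0 /\ path_in P u w0 p0)) as [(p0 & R0 & P0)|N].
  - exists (p0 ++ map (@rev X) p0 ++ l). intros w p e [<-|Hw] R Hp He.
    + rewrite (reduced_path_unique HP Hnc Hp P0 R R0) in He.
      rewrite !in_app_iff. destruct He as [He|He]; [auto|].
      right; left. rewrite <- (rev_invol e). apply in_map. exact He.
    + rewrite !in_app_iff. eauto.
  - exists l. intros w p e [<-|Hw] R Hp He; [exfalso; eauto | eauto].
Qed.

End Paths.

Section SubtreeExtension.
Variable X : graph.
Hypothesis rev_invol : forall e : edge X, rev (rev e) = e.
Variables (SV : vert X -> Prop) (SE : edge X -> Prop) (E : edge X).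
Hypotheses (hS : subtree SV SE) (HsE : SV (src E)) (HtE : ~ SV (tgt E)).

Notation SV' := (fun v => SV v \/ v = tgt E).
Notation SE' := (fun e => SE e \/ e = E \/ e = rev E).

Lemma extended_edge_from_tgt e : SE' e -> src e = tgt E -> e = rev E.
Proof.
  intros [He|[->| ->]] Hs; [exfalso | exfalso | reflexivity].
  - apply HtE. rewrite <- Hs. exact (proj1 (proj1 hS e He)).
  - apply HtE. rewrite <- Hs. exact HsE.
Qed.

Lemma extended_reduced_path a b p :
  path_in SE' a b p -> reduced p -> SV a -> SV b -> path_in SE a b p.
Proof.
  revert a; induction p as [|e p IH]; intros a Hp Hred Ha Hb; [exact Hp|].
  destruct Hp as (He & Hs & Hp). destruct He as [He|[->| ->]].
  - split; [exact He|]. split; [exact Hs|].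
    apply IH; [exact Hp | exact (reduced_tl Hred) | | exact Hb].
    exact (proj1 (proj1 hS _ (proj2 (proj1 hS e He)))).
  - exfalso. destruct p as [|f p]; [simpl in Hp; subst b; contradiction|].
    destruct Hp as (Hf & Hfs & _). apply (proj1 Hred).
    exact (extended_edge_from_tgt Hf Hfs).
  - exfalso. apply HtE. change (SV (src (rev E))). rewrite Hs. exact Ha.
Qed.

Lemma extended_edge_to_tgt e : SE' e -> tgt e = tgt E -> e = E.
Proof.
  intros He Ht. rewrite <- (rev_invol e), <- (rev_invol E). f_equal.
  apply extended_edge_from_tgt; [|exact Ht].
  destruct He as [He|[->| ->]].
  - left. exact (proj2 (proj1 hS e He)).
  - right; right; reflexivity.
  - right; left; apply rev_invol.
Qed.

(* A circuit through the new vertex [tgt E] leaves it by [rev E] and returns by [E]; between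
   these it is a circuit of [SE], or empty, in which case it backtracks. *)
Lemma extended_no_circuit : no_circuit SE'.
Proof.
  intros w p Hne Hp Hred.
  destruct (classic (SV w)) as [Hw|Hw].
  { exact (proj2 (proj2 (proj2 hS)) w p Hne (extended_reduced_path Hp Hred Hw Hw) Hred). }
  destruct p as [|e q]; [contradiction|].
  destruct Hp as (He & Hs & Hq).
  assert (Hw' : w = tgt E).
  { subst w. destruct He as [He|[->| ->]]; [| |reflexivity]; exfalso; apply Hw.
    - exact (proj1 (proj1 hS e He)).
    - exact HsE. }
  rewrite Hw' in Hs, Hq. rewrite (extended_edge_from_tgt He Hs), (tgt_rev rev_invol) in Hq.
  rewrite (extended_edge_from_tgt He Hs) in Hred.
  destruct (exists_last (l := q)) as (q' & g & ->).
  { intros ->. apply HtE. rewrite <- Hq. exact HsE. }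
  apply path_in_app in Hq as (z & Hq' & Hg & <- & Hgt).
  rewrite (extended_edge_to_tgt Hg Hgt) in Hq', Hred.
  destruct q' as [|f q'].
  - apply (proj1 Hred). symmetry. apply rev_invol.
  - apply (proj2 (proj2 (proj2 hS)) (src E) (f :: q')); [discriminate| |].
    + apply extended_reduced_path; [exact Hq' | | exact HsE | exact HsE].
      exact (reduced_app_l (reduced_tl Hred)).
    + exact (reduced_app_l (reduced_tl Hred)).
Qed.

Lemma subtree_add_edge : subtree SV' SE'.
Proof.
  destruct hS as (Hsub & _ & Hconn & _).
  assert (HinS : forall p a b, path_in SE a b p -> path_in SE' a b p)
    by (intros p a b Hp; apply (path_in_retype Hp); intros e He; left;
        exact (path_in_edges Hp He)).
  split; [|split; [|split]].
  - intros e [He|[->| ->]].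
    + destruct (Hsub e He). split; left; auto.
    + split; [left; exact HsE | right; right; reflexivity].
    + split; [right; reflexivity | right; left; apply rev_invol].
  - exists (src E). left. exact HsE.
  - intros u w [Hu| ->] [Hw| ->].
    + destruct (Hconn u w Hu Hw) as (p & Hp). eauto.
    + destruct (Hconn u (src E) Hu HsE) as (p & Hp). exists (p ++ [E]).
      apply path_in_app. exists (src E). split; [eauto|]. simpl. auto.
    + destruct (Hconn (src E) w HsE Hw) as (p & Hp). exists (rev E :: p). simpl.
      rewrite (tgt_rev rev_invol). auto.
    + exists []. reflexivity.
  - exact extended_no_circuit.
Qed.

End SubtreeExtension.

Lemma maximal_subtree_spanning (X : graph) (PV : vert X -> Prop) (PE : edge X -> Prop)
  (SV : vert X -> Prop) (SE : edge X -> Prop) :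
  (forall e : edge X, rev (rev e) = e) ->
  subgraph PV PE -> connected_sub PV PE -> maximal_subtree PV PE SV SE ->
  forall v, PV v -> SV v.
Proof.
  intros rev_invol Hsub Hconn (HS & HSV & HSE & Hmax) v Hv. apply NNPP; intros Nv.
  pose proof HS as (_ & (s & Hs) & _).
  destruct (Hconn s v (HSV s Hs) Hv) as (p & Hp).
  destruct (path_in_exit Hp Hs Nv) as (E & HE & HsE & HtE).
  destruct (Hmax _ _ (subtree_add_edge rev_invol HS HsE HtE)) as [Hext _].
  - intros w [Hw| ->]; [exact (HSV w Hw)|]. exact (proj1 (Hsub _ (proj2 (Hsub E HE)))).
  - intros e [He|[->| ->]]; [exact (HSE e He) | exact HE | exact (proj2 (Hsub E HE))].
  - intros w Hw. left. exact Hw.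
  - intros e He. left. exact He.
  - apply HtE, Hext. right. reflexivity.
Qed.

Section TypeAction.
Variables (G : group) (Y : Type) (act : G -> Y -> Y).
Hypothesis act1 : forall y, act (gone G) y = y.
Hypothesis actM : forall g h y, act (gmul g h) y = act g (act h y).

Lemma act_invK g y : act (ginv g) (act g y) = y.
Proof. rewrite <- actM, gmulV. apply act1. Qed.

Lemma act_Kinv g y : act g (act (ginv g) y) = y.
Proof. rewrite <- actM, gmulV_r. apply act1. Qed.

Lemma act_inj g y z : act g y = act g z -> y = z.
Proof. intros E. rewrite <- (act_invK g y), E. apply act_invK. Qed.

Variable H : G -> Prop.
Hypothesis hH : subgroup H.

Definition orbit (y : Y) : Y -> Prop := fun z => exists h, H h /\ act h y = z.

Lemma orbit_refl y : orbit y y.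
Proof. exists (gone G). split; [apply hH | apply act1]. Qed.

Lemma orbit_eq y z : orbit y = orbit z <-> orbit y z.
Proof.
  destruct hH as (_ & HM & HV). split.
  - intros E. rewrite E. apply orbit_refl.
  - intros (h & Hh & <-). apply functional_extensionality; intros x.
    apply propositional_extensionality. split.
    + intros (k & Hk & <-). exists (gmul k (ginv h)). split; [auto|].
      rewrite actM, act_invK. reflexivity.
    + intros (k & Hk & <-). exists (gmul k h). split; [auto|]. apply actM.
Qed.

Lemma orbit_act h y : H h -> orbit (act h y) = orbit y.
Proof. intros Hh. symmetry. apply orbit_eq. exists h. auto. Qed.

End TypeAction.

Section Orbits.
Variables (G : group) (T : graph) (A : action G T) (H : G -> Prop).
Hypothesis hH : subgroup H.

Lemma actVK g v : actV A (ginv g) (actV A g v) = v.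
Proof. apply (act_invK (actV1 A) (actVM A)). Qed.

Lemma actVKV g v : actV A g (actV A (ginv g) v) = v.
Proof. apply (act_Kinv (actV1 A) (actVM A)). Qed.

Lemma actEK g e : actE A (ginv g) (actE A g e) = e.
Proof. apply (act_invK (actE1 A) (actEM A)). Qed.

Lemma actE_inj g e f : actE A g e = actE A g f -> e = f.
Proof. apply (act_inj (actE1 A) (actEM A)). Qed.

Lemma orbitE_refl e : orbitE A H e e.
Proof. apply (orbit_refl (actE1 A) hH). Qed.

Lemma orbitV_eq v w : orbitV A H v = orbitV A H w <-> orbitV A H v w.
Proof. apply (orbit_eq (actV1 A) (actVM A) hH). Qed.

Lemma orbitE_eq e f : orbitE A H e = orbitE A H f <-> orbitE A H e f.
Proof. apply (orbit_eq (actE1 A) (actEM A) hH). Qed.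

Lemma orbitV_act h v : H h -> orbitV A H (actV A h v) = orbitV A H v.
Proof. apply (orbit_act (actV1 A) (actVM A) hH). Qed.

Lemma orbitE_act h e : H h -> orbitE A H (actE A h e) = orbitE A H e.
Proof. apply (orbit_act (actE1 A) (actEM A) hH). Qed.

Lemma path_in_act (P : edge T -> Prop) g p u v : path_in P u v p ->
  path_in (fun _ => True) (actV A g u) (actV A g v) (map (actE A g) p).
Proof.
  revert u; induction p as [|e p IH]; cbn [path_in map]; intros u Hp; [congruence|].
  destruct Hp as (_ & <- & Hp). split; [exact I|]. split; [apply act_src|].
  unfold tgt. rewrite act_rev, act_src. auto.
Qed.

Lemma reduced_act g p : reduced p -> reduced (map (actE A g) p).
Proof.
  induction p as [|e [|f p] IH]; intros Hp; [exact I | exact I |].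
  split; [|exact (IH (reduced_tl Hp))].
  rewrite act_rev. intros C. exact (proj1 Hp (actE_inj C)).
Qed.

Notation Y := (quot_graph A H).
Notation oV := (orbitV A H).
Notation oE := (orbitE A H : edge T -> edge Y).

Lemma quot_src e : src (oE e) = oV (src e).
Proof.
  apply functional_extensionality; intros w. apply propositional_extensionality. split.
  - intros (e' & (h & Hh & <-) & k & Hk & <-). rewrite act_src, <- actVM.
    exists (gmul k h). split; [apply hH; auto | reflexivity].
  - intros Hw. exists e. split; [apply orbitE_refl | exact Hw].
Qed.

Hypothesis rev_invol : forall e : edge T, rev (rev e) = e.

Lemma quot_rev e : rev (oE e) = oE (rev e).
Proof.
  apply functional_extensionality; intros f. apply propositional_extensionality.
  simpl. split; intros (h & Hh & Ef); exists h; split; auto.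
  - rewrite <- act_rev, Ef. apply rev_invol.
  - rewrite <- Ef, act_rev, rev_invol. reflexivity.
Qed.

Lemma quot_tgt e : tgt (oE e) = oV (tgt e).
Proof. unfold tgt. rewrite quot_rev. apply quot_src. Qed.

Lemma quot_rev_invol (E : edge Y) : rev (rev E) = E.
Proof. apply functional_extensionality; intros f. simpl. rewrite rev_invol. reflexivity. Qed.

Lemma path_in_quot (P : edge T -> Prop) (Q : edge Y -> Prop) p u v :
  path_in P u v p -> (forall e, In e p -> Q (oE e)) -> path_in Q (oV u) (oV v) (map oE p).
Proof.
  revert u; induction p as [|e p IH]; cbn [path_in map In]; intros u Hp HQ; [congruence|].
  destruct Hp as (_ & <- & Hp). rewrite quot_src, quot_tgt.
  split; [auto|]. split; [reflexivity|]. auto.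
Qed.

Lemma quot_subgraph : subgraph (@QV _ _ A H) (@QE _ _ A H).
Proof.
  intros E (e & ->). split.
  - exists (src e). apply quot_src.
  - exists (rev e). apply quot_rev.
Qed.

Lemma quot_connected : connected_sub (fun _ : vert T => True) (fun _ : edge T => True) ->
  connected_sub (@QV _ _ A H) (@QE _ _ A H).
Proof.
  intros Hconn _ _ (u & ->) (v & ->). destruct (Hconn u v I I) as (p & Hp).
  exists (map oE p). apply (path_in_quot Hp). intros e _. exists e. reflexivity.
Qed.

End Orbits.

Section Trees.
Variable T : graph.
Hypothesis hT : is_tree T.

Lemma tree_rev_invol (e : edge T) : rev (rev e) = e.
Proof. exact (proj1 (proj1 hT) e). Qed.

Lemma tree_geodesic u v : exists p, reduced p /\ path_in (fun _ : edge T => True) u v p.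
Proof.
  destruct (proj1 (proj2 (proj2 (proj2 hT))) u v I I) as (p & Hp).
  exact (reduce_path tree_rev_invol Hp).
Qed.

Lemma tree_geodesic_unique p q u v :
  path_in (fun _ : edge T => True) u v p -> path_in (fun _ => True) u v q ->
  reduced p -> reduced q -> p = q.
Proof.
  apply reduced_path_unique; [exact tree_rev_invol | auto | exact (proj2 (proj2 (proj2 (proj2 hT))))].
Qed.

End Trees.

Section FreeOnEdges.
Variables (G : group) (T : graph) (A : action G T) (H : G -> Prop).
Hypotheses (hT : is_tree T) (hH : subgroup H) (hfree : acts_freely_on_edges A H).

Notation rev_invol := (tree_rev_invol hT).

Lemma free_moves_edges g e : H g -> g <> gone G -> actE A g e <> e.
Proof. intros Hg Hg1 He. exact (Hg1 (hfree Hg He)). Qed.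

Lemma path_via_fixed_point g q r p :
  H g -> g <> gone G -> actV A g q = q ->
  reduced p -> path_in (fun _ => True) r q p ->
  reduced (p ++ revp (map (actE A g) p)) /\
  path_in (fun _ => True) r (actV A g r) (p ++ revp (map (actE A g) p)).
Proof.
  intros Hg Hg1 Hq Hred Hp. split.
  - apply reduced_app; [exact Hred | apply reduced_revp, reduced_act; [exact rev_invol | exact Hred] |].
    intros p' x y q' -> E. rewrite map_app in E. cbn [map] in E. rewrite revp_snoc in E.
    injection E as <- _.
    intros C. apply (free_moves_edges (e := x) Hg Hg1).
    rewrite <- (rev_invol (actE A g x)), C. apply rev_invol.
  - apply path_in_app. exists q. split; [exact Hp|].
    apply path_in_revp; [exact rev_invol | auto |].
    rewrite <- Hq. exact (path_in_act A g Hp).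
Qed.

Lemma fixed_points_eq a b p q r :
  H a -> H b -> a <> gone G -> b <> gone G ->
  actV A a p = p -> actV A b q = q -> actV A a r = actV A b r -> p = q.
Proof.
  intros Ha Hb Ha1 Hb1 Hp Hq Hr.
  destruct (tree_geodesic hT r p) as (alpha & Ra & Pa).
  destruct (tree_geodesic hT r q) as (beta & Rb & Pb).
  destruct (path_via_fixed_point Ha Ha1 Hp Ra Pa) as (Ra' & Pa').
  destruct (path_via_fixed_point Hb Hb1 Hq Rb Pb) as (Rb' & Pb').
  rewrite Hr in Pa'.
  pose proof (tree_geodesic_unique hT Pa' Pb' Ra' Rb') as E.
  assert (Hlen : length alpha = length beta).
  { apply (f_equal (@length _)) in E.
    rewrite !length_app, !length_revp, !length_map in E. lia. }
  rewrite (app_inj_length Hlen E) in Pa.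
  exact (path_in_target Pa Pb).
Qed.

Lemma elliptic_fixes_vertex :
  (forall h, H h -> exists v, actV A h v = v) -> fixes_vertex A H.
Proof.
  intros Hell. destruct (classic (exists a, H a /\ a <> gone G)) as [(a & Ha & Ha1)|Htriv].
  - destruct (Hell a Ha) as (p & Hp). exists p. intros b Hb.
    destruct (classic (b = gone G)) as [->|Hb1]; [apply actV1|].
    destruct (Hell b Hb) as (q & Hq).
    destruct (Hell (gmul (ginv a) b)) as (r & Hr); [apply hH; [apply hH, Ha | exact Hb]|].
    rewrite actVM in Hr.
    assert (Hr' : actV A a r = actV A b r) by (rewrite <- Hr at 1; apply actVKV).
    rewrite (fixed_points_eq Ha Hb Ha1 Hb1 Hp Hq Hr'). exact Hq.
  - destruct (proj1 (proj2 (proj2 hT))) as (v & _). exists v. intros h Hh.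
    destruct (classic (h = gone G)) as [->|Hh1]; [apply actV1|].
    exfalso. eauto.
Qed.

Notation oV := (orbitV A H).
Notation oE := (orbitE A H : edge T -> edge (quot_graph A H)).

Definition trivial_stabilizer (v : vert T) : Prop :=
  forall h, H h -> actV A h v = v -> h = gone G.

Lemma degenerate_trivial_stabilizer v :
  @quot_degenerate _ _ A H (oV v) -> trivial_stabilizer v.
Proof.
  intros (w & Ev & e & _ & Hstab) h Hh Hfix.
  apply (orbitV_eq A hH) in Ev as (k & Hk & Ekv).
  pose (h' := gmul k (gmul h (ginv k))).
  assert (Hh' : H h') by (apply hH; [exact Hk | apply hH; [exact Hh | apply hH, Hk]]).
  apply (gconj_eq1 (k := k)), (hfree (e := e) Hh'), Hstab; [exact Hh'|].
  unfold h'. rewrite <- Ekv, !actVM, actVK, Hfix. reflexivity.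
Qed.

Lemma quot_no_backtrack f g : tgt f = src g -> g <> rev f ->
  trivial_stabilizer (src g) -> oE g <> rev (oE f).
Proof.
  intros Hfg Hg Hstab E. rewrite (quot_rev A H rev_invol) in E. symmetry in E.
  apply (orbitE_eq A hH) in E as (h & Hh & Eh).
  assert (h = gone G) as ->.
  { apply Hstab; [exact Hh|]. rewrite <- Eh at 2. rewrite act_src. f_equal. symmetry; exact Hfg. }
  apply Hg. rewrite <- Eh. apply actE1.
Qed.

Lemma quot_reduced p u v : path_in (fun _ => True) u v p -> reduced p ->
  (forall e, In e (tl p) -> trivial_stabilizer (src e)) -> reduced (map oE p).
Proof.
  revert u; induction p as [|f [|g p] IH]; intros u Hp Hred Hstab; [exact I | exact I |].
  destruct Hp as (_ & _ & Hp). split.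
  - apply quot_no_backtrack; [exact (eq_sym (proj1 (proj2 Hp))) | exact (proj1 Hred) |].
    apply Hstab. left. reflexivity.
  - apply (IH _ Hp (reduced_tl Hred)). intros e He. apply Hstab. right. exact He.
Qed.

End FreeOnEdges.

Lemma exists_filtered_list (B : Type) (Q : B -> Prop) (l : list B) : exists l',
  (forall x, In x l -> Q x -> In x l') /\ (forall x, In x l' -> Q x) /\
  length l' <= length l /\ ((exists x, In x l /\ ~ Q x) -> length l' < length l).
Proof.
  induction l as [|a l IH].
  { exists []. simpl. split; [tauto|]. split; [tauto|]. split; [lia|]. intros (x & [] & _). }
  destruct IH as (l' & Hin & HQ & Hle & Hlt).
  destruct (classic (Q a)) as [Qa|Qa].
  - exists (a :: l'). simpl. split; [|split; [|split]].
    + intros x [<-|Hx] Qx; auto.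
    + intros x [<-|Hx]; auto.
    + lia.
    + intros (x & [<-|Hx] & Qx); [contradiction|]. assert (length l' < length l) by eauto. lia.
  - exists l'. simpl. split; [|split; [|split]].
    + intros x [<-|Hx] Qx; [contradiction | auto].
    + exact HQ.
    + lia.
    + intros _. lia.
Qed.

Lemma subtree_vertex_src (X : graph) (SV : vert X -> Prop) (SE : edge X -> Prop) :
  subtree SV SE -> (exists e, SE e) -> forall v, SV v -> exists f, SE f /\ src f = v.
Proof.
  intros (Hsub & _ & Hconn & _) (e & He) v Hv.
  destruct (Hconn v (src e) Hv (proj1 (Hsub e He))) as ([|f p] & Hp).
  - exists e. split; [exact He | exact (eq_sym Hp)].
  - exists f. split; apply Hp.
Qed.

Section MinimalSubtree.
Variables (G : group) (T : graph) (A : action G T) (H : G -> Prop).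
Hypothesis hH : subgroup H.

Definition covers_edge_orbits (SE : edge T -> Prop) (l : list (edge T)) : Prop :=
  forall e, SE e -> exists e0, In e0 l /\ SE e0 /\ orbitE A H e0 e.

Lemma covers_of_finite_orbits (SE : edge T -> Prop) (LQ : list (edge (quot_graph A H))) :
  (forall e, SE e -> In (orbitE A H e) LQ) -> exists l, covers_edge_orbits SE l.
Proof.
  intros HLQ.
  enough (Hgen : exists l, forall e, SE e -> In (orbitE A H e) LQ ->
                   exists e0, In e0 l /\ SE e0 /\ orbitE A H e0 e)
    by (destruct Hgen as (l & Hl); exists l; intros e He; exact (Hl e He (HLQ e He))).
  clear HLQ. induction LQ as [|Q LQ (l & Hl)]; [exists []; intros e _ []|].
  destruct (classic (exists e1, SE e1 /\ orbitE A H e1 = Q)) as [(e1 & He1 & <-)|N].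
  - exists (e1 :: l). intros e He [Hx|Hx].
    + exists e1. split; [left; reflexivity|]. split; [exact He1|]. apply (orbitE_eq A hH), Hx.
    + destruct (Hl e He Hx) as (e0 & Hin & Hrep). exists e0. split; [right; exact Hin | exact Hrep].
  - exists l. intros e He [Hx|Hx]; [exfalso; eauto | exact (Hl e He Hx)].
Qed.

Lemma covers_restrict (SE SE' : edge T -> Prop) l e :
  (forall h e, H h -> SE' e -> SE' (actE A h e)) -> (forall e, SE' e -> SE e) ->
  covers_edge_orbits SE l -> SE e -> ~ SE' e ->
  exists l', covers_edge_orbits SE' l' /\ length l' < length l.
Proof.
  intros Hinv' Hsub Hcov He Ne.
  destruct (exists_filtered_list SE' l) as (l' & Hin & HQ & _ & Hlt).
  exists l'. split.
  - intros e' He'. destruct (Hcov e' (Hsub e' He')) as (e0 & Hl & _ & h & Hh & <-).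
    assert (He0 : SE' e0) by (rewrite <- (actEK A h e0); apply Hinv'; [apply hH|]; auto).
    exists e0. split; [auto|]. split; [exact He0|]. exists h. auto.
  - apply Hlt. destruct (Hcov e He) as (e0 & Hl & _ & h & Hh & <-).
    exists e0. split; [exact Hl|]. intros C. exact (Ne (Hinv' h e0 Hh C)).
Qed.

Lemma invariant_subtree_has_edge (SV : vert T -> Prop) (SE : edge T -> Prop) :
  (exists h, H h /\ hyperbolic A h) -> H_inv_subtree A H SV SE -> exists e, SE e.
Proof.
  intros (h & Hh & Hhyp) ((_ & (w & Hw) & Hconn & _) & HinvV & _).
  destruct (Hconn w (actV A h w) Hw (HinvV h w Hh Hw)) as ([|f p] & Hp).
  - exfalso. exact (Hhyp w (eq_sym Hp)).
  - exists f. apply Hp.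
Qed.

Lemma covers_finite_quotient (SV : vert T -> Prop) (SE : edge T -> Prop) l :
  (forall v, SV v -> exists f, SE f /\ src f = v) -> covers_edge_orbits SE l ->
  finite_quotient A H SV SE.
Proof.
  intros Hsrc Hcov. split.
  - exists (map (fun e => orbitV A H (src e)) l). intros X (v & Hv & ->).
    destruct (Hsrc v Hv) as (f & Hf & <-). destruct (Hcov f Hf) as (e0 & Hl & _ & h & Hh & <-).
    apply in_map_iff. exists e0. split; [|exact Hl].
    rewrite act_src. symmetry. exact (orbitV_act A hH (src e0) Hh).
  - exists (map (orbitE A H) l). intros X (e & He & ->).
    destruct (Hcov e He) as (e0 & Hl & _ & h & Hh & <-).
    apply in_map_iff. exists e0. split; [|exact Hl]. symmetry. exact (orbitE_act A hH e0 Hh).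
Qed.

Lemma minimal_subtree_exists (SV : vert T -> Prop) (SE : edge T -> Prop) l :
  (exists h, H h /\ hyperbolic A h) -> H_inv_subtree A H SV SE -> covers_edge_orbits SE l ->
  exists SV' SE', minimal_H_subtree A H SV' SE' /\ finite_quotient A H SV' SE'.
Proof.
  intros Hhyp. remember (length l) as n eqn:Hn. revert SV SE l Hn.
  induction n as [n IH] using lt_wf_ind. intros SV SE l -> Hinv Hcov.
  pose proof (subtree_vertex_src (proj1 Hinv) (invariant_subtree_has_edge Hhyp Hinv)) as Hsrc.
  destruct (classic (exists SV' SE', H_inv_subtree A H SV' SE' /\ (forall v, SV' v -> SV v) /\
                       (forall e, SE' e -> SE e) /\ exists e, SE e /\ ~ SE' e))
    as [(SV' & SE' & Hinv' & _ & HE & e & He & Ne)|Hmin].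
  - destruct (covers_restrict (proj2 (proj2 Hinv')) HE Hcov He Ne) as (l' & Hcov' & Hlt).
    exact (IH _ Hlt SV' SE' l' eq_refl Hinv' Hcov').
  - exists SV, SE. split; [split; [exact Hinv|] | exact (covers_finite_quotient Hsrc Hcov)].
    intros SV' SE' Hinv' HV HE.
    assert (HE' : forall e, SE e -> SE' e)
      by (intros e He; apply NNPP; intros Ne; apply Hmin; exists SV', SE'; eauto 6).
    split; [|exact HE'].
    intros v Hv. destruct (Hsrc v Hv) as (f & Hf & <-).
    exact (proj1 (proj1 (proj1 Hinv') f (HE' f Hf))).
Qed.

End MinimalSubtree.

Section Core.
Variables (G : group) (T : graph) (A : action G T) (H : G -> Prop).
Hypotheses (hT : is_tree T) (hH : subgroup H) (hfree : acts_freely_on_edges A H).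

Notation Y := (quot_graph A H).
Notation oV := (orbitV A H).
Notation oE := (orbitE A H : edge T -> edge Y).
Notation QVH := (@QV _ _ A H).
Notation QEH := (@QE _ _ A H).
Notation rev_invol := (tree_rev_invol hT).
Notation quot_invol := (quot_rev_invol rev_invol).

Variables (SVq : vert Y -> Prop) (SEq : edge Y -> Prop) (base : vert Y).
Hypotheses (hmax : maximal_subtree QVH QEH SVq SEq) (hbase : SVq base).

Lemma S_rev E : SEq E -> SEq (rev E).
Proof. intros HE. exact (proj2 (proj1 (proj1 hmax) E HE)). Qed.

Lemma S_connected : connected_sub SVq SEq.
Proof. exact (proj1 (proj2 (proj2 (proj1 hmax)))). Qed.

Lemma S_no_circuit : no_circuit SEq.
Proof. exact (proj2 (proj2 (proj2 (proj1 hmax)))). Qed.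

Lemma S_quot_edge E : SEq E -> QEH E.
Proof. exact (proj1 (proj2 (proj2 hmax)) E). Qed.

Lemma S_spanning X : QVH X -> SVq X.
Proof.
  apply (maximal_subtree_spanning quot_invol (quot_subgraph hH rev_invol)
           (quot_connected hH rev_invol (proj1 (proj2 (proj2 (proj2 hT))))) hmax).
Qed.

Lemma S_geodesic X : QVH X -> exists p, reduced p /\ path_in SEq base X p.
Proof.
  intros HX. destruct (S_connected hbase (S_spanning HX)) as (p & Hp).
  exact (reduce_path quot_invol Hp).
Qed.

Definition anchor (X : vert Y) : Prop :=
  (QVH X /\ ~ @quot_degenerate _ _ A H X) \/ (exists E, QEH E /\ ~ SEq E /\ X = src E).

Definition core_qedge (E : edge Y) : Prop :=
  (QEH E /\ ~ SEq E) \/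
  (exists X p, anchor X /\ reduced p /\ path_in SEq base X p /\ (In E p \/ In (rev E) p)).

Definition core_edge (e : edge T) : Prop := core_qedge (oE e).

Definition core_vertex (v : vert T) : Prop :=
  oV v = base \/ exists e, core_edge e /\ src e = v.

Lemma core_qedge_rev E : core_qedge E -> core_qedge (rev E).
Proof.
  intros [(HQ & HS)|(X & p & HX & Hred & Hp & Hin)].
  - left. split; [exact (proj2 (quot_subgraph hH rev_invol HQ))|].
    intros C. apply HS. rewrite <- (quot_invol E). exact (S_rev C).
  - right. exists X, p. rewrite quot_invol. tauto.
Qed.

Lemma core_edge_rev e : core_edge e -> core_edge (rev e).
Proof. unfold core_edge. rewrite <- (quot_rev A H rev_invol). apply core_qedge_rev. Qed.

Lemma core_edge_src e : core_edge e -> core_vertex (src e).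
Proof. intros He. right. exists e. auto. Qed.

Lemma core_edge_tgt e : core_edge e -> core_vertex (tgt e).
Proof. intros He. exact (core_edge_src (core_edge_rev He)). Qed.

Lemma core_vertex_of_orbit e w : core_qedge (oE e) -> oV (src e) = oV w -> core_vertex w.
Proof.
  intros He Ew. apply (orbitV_eq A hH) in Ew as (k & Hk & <-).
  right. exists (actE A k e). split; [|apply act_src].
  unfold core_edge. rewrite (orbitE_act A hH e Hk). exact He.
Qed.

Notation in_S_core := (fun F => SEq F /\ core_qedge F).

Lemma anchor_S_path X p : anchor X -> reduced p -> path_in SEq base X p ->
  path_in in_S_core base X p.
Proof.
  intros HX Hred Hp. apply (path_in_retype Hp). intros F HF.
  split; [exact (path_in_edges Hp HF)|]. right. exists X, p. auto.
Qed.

Lemma core_qedge_S_path E : core_qedge E -> exists p, path_in in_S_core base (src E) p.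
Proof.
  intros [(HQ & HS)|(X & p & HX & Hred & Hp & [Hin|Hin])].
  - destruct (S_geodesic (proj1 (quot_subgraph hH rev_invol HQ))) as (p & Hred & Hp).
    exists p. apply anchor_S_path; [right; exists E|..]; auto.
  - pose proof (anchor_S_path HX Hred Hp) as HZ.
    apply in_split in Hin as (p1 & p2 & ->). apply path_in_app in HZ as (w & H1 & _ & Hs & _).
    exists p1. rewrite Hs. exact H1.
  - pose proof (anchor_S_path HX Hred Hp) as HZ.
    apply in_split in Hin as (p1 & p2 & ->). apply path_in_app in HZ as (w & H1 & HE & Hs & _).
    exists (p1 ++ [rev E]). apply path_in_app. exists w.
    split; [exact H1|]. split; [exact HE|]. split; [exact Hs|]. apply (tgt_rev quot_invol).
Qed.

Lemma core_vertex_S_path w : core_vertex w -> exists p, path_in in_S_core base (oV w) p.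
Proof.
  intros [Hw|(e & He & <-)].
  - exists []. exact (eq_sym Hw).
  - destruct (core_qedge_S_path He) as (p & Hp). exists p.
    rewrite <- (quot_src A hH). exact Hp.
Qed.

Lemma noncore_vertex_trivial_stabilizer w :
  ~ core_vertex w -> trivial_stabilizer A H w.
Proof.
  intros Nw. destruct (classic (@quot_degenerate _ _ A H (oV w))) as [D|ND].
  { exact (degenerate_trivial_stabilizer hH hfree D). }
  exfalso. destruct (S_geodesic (ex_intro _ w eq_refl)) as (p & Hred & Hp).
  destruct (exists_last (l := p)) as (p' & E & ->).
  { intros ->. apply Nw. left. exact (eq_sym Hp). }
  pose proof Hp as Hp'. apply path_in_app in Hp' as (z & _ & HE & _ & Ht).
  destruct (S_quot_edge HE) as (e & ->).
  apply Nw, (core_vertex_of_orbit (e := rev e)).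
  - rewrite <- (quot_rev A H rev_invol). right. exists (oV w), (p' ++ [orbitE A H e]).
    split; [left; split; [exists w; reflexivity | exact ND]|].
    split; [exact Hred|]. split; [exact Hp|].
    right. rewrite quot_invol. apply in_or_app. right. left. reflexivity.
  - change (src (rev e)) with (tgt e). rewrite <- (quot_tgt A hH rev_invol). exact Ht.
Qed.

Lemma S_of_noncore_edge e : ~ core_edge e -> SEq (oE e).
Proof. intros N. apply NNPP. intros C. apply N. left. split; [exists e; reflexivity | exact C]. Qed.

Lemma no_core_excursion e m u z :
  path_in (fun _ => True) u z (e :: m) -> reduced (e :: m) ->
  core_vertex u -> core_vertex z -> ~ core_edge e ->
  (forall f, In f m -> ~ core_vertex (src f)) -> False.
Proof.
  intros Hp Hred Hu Hz He Hm.
  assert (Hout : forall f, In f (e :: m) -> ~ core_edge f).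
  { intros f [<-|Hf]; [exact He|]. intros C. exact (Hm f Hf (core_edge_src C)). }
  assert (Pexc : path_in SEq (oV u) (oV z) (map oE (e :: m))).
  { apply (path_in_quot hH rev_invol Hp). intros f Hf. exact (S_of_noncore_edge (Hout f Hf)). }
  assert (Rexc : reduced (map oE (e :: m))).
  { apply (quot_reduced hT hH Hp Hred). intros f Hf.
    exact (noncore_vertex_trivial_stabilizer (Hm f Hf)). }
  destruct (core_vertex_S_path Hz) as (pz & Hpz).
  destruct (core_vertex_S_path Hu) as (pu & Hpu).
  assert (Hback : path_in in_S_core (oV z) (oV u) (revp pz ++ pu)).
  { apply path_in_app. exists base. split; [|exact Hpu].
    apply (path_in_revp quot_invol); [|exact Hpz].
    intros F (HF & HZ). exact (conj (S_rev HF) (core_qedge_rev HZ)). }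
  destruct (reduce_path quot_invol Hback) as (rho & Rrho & Prho).
  apply (S_no_circuit (v := oV u) (p := map oE (e :: m) ++ rho)); [discriminate | |].
  - apply path_in_app. exists (oV z). split; [exact Pexc|].
    apply (path_in_retype Prho). intros F HF. exact (proj1 (path_in_edges Prho HF)).
  - apply reduced_app; [exact Rexc | exact Rrho |]. intros p' x y q' Ex Ey Eyx.
    assert (Hx : In x (map oE (e :: m))) by (rewrite Ex; apply in_or_app; right; left; reflexivity).
    apply in_map_iff in Hx as (f & <- & Hf). apply (Hout f Hf).
    unfold core_edge. rewrite <- (quot_invol (oE f)), <- Eyx. apply core_qedge_rev.
    apply (path_in_edges Prho). rewrite Ey. left. reflexivity.
Qed.

Lemma core_geodesic p u v : path_in (fun _ => True) u v p -> reduced p ->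
  core_vertex u -> core_vertex v -> forall e, In e p -> core_edge e.
Proof.
  revert u; induction p as [|e q IH]; intros u Hp Hred Hu Hv f Hf; [destruct Hf|].
  destruct Hp as (_ & Hs & Hq).
  destruct (classic (core_edge e)) as [He|He].
  - destruct Hf as [<-|Hf]; [exact He|].
    exact (IH _ Hq (reduced_tl Hred) (core_edge_tgt He) Hv f Hf).
  - exfalso. destruct (path_in_first_hit Hq Hv) as (m & r & z & -> & Hm & Hz & Hfirst).
    apply (no_core_excursion (e := e) (m := m) (u := u) (z := z)); auto.
    + split; [exact I|]. split; [exact Hs | exact Hm].
    + exact (reduced_app_l (p := e :: m) Hred).
Qed.

Lemma core_invariant_subtree : H_inv_subtree A H core_vertex core_edge.
Proof.
  split; [split; [|split; [|split]]|split].
  - intros e He. exact (conj (core_edge_src He) (core_edge_rev He)).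
  - destruct (proj1 (proj2 hmax) base hbase) as (v & Ev). exists v. left. exact (eq_sym Ev).
  - intros u v Hu Hv. destruct (tree_geodesic hT u v) as (p & Hred & Hp).
    exists p. apply (path_in_retype Hp). exact (core_geodesic Hp Hred Hu Hv).
  - intros v p Hne Hp. apply (proj2 (proj2 (proj2 (proj2 hT))) v p Hne).
    apply (path_in_retype Hp). auto.
  - intros h v Hh [Ev|(e & He & <-)].
    + left. rewrite (orbitV_act A hH v Hh). exact Ev.
    + right. exists (actE A h e). split; [|apply act_src].
      unfold core_edge. rewrite (orbitE_act A hH e Hh). exact He.
  - intros h e Hh He. unfold core_edge. rewrite (orbitE_act A hH e Hh). exact He.
Qed.

Lemma core_qedge_finite :
  fin_set (fun E => QEH E /\ ~ SEq E) -> fin_set (fun X => QVH X /\ ~ @quot_degenerate _ _ A H X) ->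
  fin_set core_qedge.
Proof.
  intros (L1 & HL1) (L2 & HL2).
  destruct (reduced_paths_edges_finite quot_invol (L2 ++ map (@src Y) L1) base S_rev S_no_circuit)
    as (LP & HLP).
  exists (L1 ++ LP). intros E [HE|(X & p & HX & Hred & Hp & Hin)]; apply in_or_app; [left; auto|].
  right. apply (HLP X p E); auto. apply in_or_app.
  destruct HX as [HX|(F & HF & NF & ->)]; [left; auto | right; apply in_map; auto].
Qed.

End Core.

Lemma finite_Kurosh_rank_core (G : group) (T : graph) (A : action G T) (H : G -> Prop) :
  is_tree T -> subgroup H -> acts_freely_on_edges A H -> Kurosh_rank_finite A H ->
  (exists h, H h /\ hyperbolic A h) ->
  exists SV SE l, H_inv_subtree A H SV SE /\ covers_edge_orbits A H SE l.
Proof.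
  intros hT hH hfree hK Hhyp.
  destruct (hK Hhyp) as ((SVq & SEq & Hmax & Hrank) & Hndeg).
  pose proof Hmax as ((_ & (base & Hbase) & _) & _).
  destruct (core_qedge_finite hT base Hmax Hrank Hndeg) as (LZ & HLZ).
  destruct (covers_of_finite_orbits hH (SE := core_edge SEq base) (LQ := LZ)) as (l & Hl).
  { intros e He. exact (HLZ _ He). }
  exists (core_vertex SEq base), (core_edge SEq base), l.
  split; [exact (core_invariant_subtree hT hH hfree Hmax Hbase) | exact Hl].
Qed.

Theorem lemma2p3 (G : group) (T : graph) (A : action G T)
  (hT : is_tree T) (hinv : without_inversions A)
  (H : G -> Prop) (hH : subgroup H) (hfree : acts_freely_on_edges A H)
  (hK : Kurosh_rank_finite A H) :
  tame A H.
Proof.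
  destruct (classic (exists h, H h /\ hyperbolic A h)) as [Hhyp|Hell].
  - right. split; [exact Hhyp|].
    destruct (finite_Kurosh_rank_core hT hH hfree hK Hhyp) as (SV & SE & l & Hinv & Hcov).
    exact (minimal_subtree_exists hH Hhyp Hinv Hcov).
  - left. apply (elliptic_fixes_vertex hT hH hfree). intros h Hh.
    apply NNPP. intros Hfix. apply Hell. exists h. split; [exact Hh|].
    intros v Hv. exact (Hfix (ex_intro _ v Hv)).
Qed.
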